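(* Let $\psi\in(-\pi,\pi]$, $\tau>0$, and $k\in\mathbb{Z}\setminus\{0\}$. Then for every $(a,w)\in\mathbb{R}\times(\mathbb{C}\setminus\{0\})$ with $|a|<|w|$ and every $s>0$, $(sa,sw)\in\Gamma_k(\psi;\tau)$ if and only if $s = \frac{1}{\tau}\tau^{+}_{k}(a,w)$ (when $k>0$), respectively $s=\frac1\tau\tau^{-}_{-k}(a,w)$ (when $k<0$), and $\operatorname{Arg}(w)=\psi$.
   Context: $\operatorname{Arg}(w)\in(-\pi,\pi]$ is the principal argument; $\arccos:[-1,1]\to[0,\pi]$. For $|a|<|w|$ and integers $n\ge1$: $\tau_n^\pm(a,w) := \frac{1}{\sqrt{|w|^2-a^2}}[\pm\operatorname{Arg}(w)-\arccos(a/|w|)+2n\pi]$. $a(\Omega,\psi;\tau) := -\Omega\cot(\tau\Omega-\psi)$, $\rho(\Omega,\psi;\tau) := -\Omega/\sin(\tau\Omega-\psi)$. For $k\ge1$, $I_k(\psi) := (-\pi,0)+\psi+2k\pi$; for $k\le-1$, $I_k(\psi) := (0,\pi)+\psi+2k\pi$. $\Gamma_k(\psi;\tau) := \{(a(\Omega,\psi;\tau),\,\rho(\Omega,\psi;\tau)e^{i\psi}) : \tau\Omega\in I_k(\psi)\}\subset\mathbb{R}\times\mathbb{C}$. *)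

From Stdlib Require Import Reals ZArith.
From Coquelicot Require Import Coquelicot.
Open Scope R_scope.

(* Principal argument Arg(w) in (-PI, PI] for w <> 0 (value at 0 irrelevant).
   Stdlib's acos : [-1,1] -> [0,PI]. *)
Definition Arg (w : C) : R :=
  if Rle_dec 0 (Im w) then acos (Re w / Cmod w) else - acos (Re w / Cmod w).

(* tau_n^{+/-}(a,w), n >= 1 (sgn = +1 for tau^+, -1 for tau^-). *)
Definition tau_pm (sgn : R) (n : Z) (a : R) (w : C) : R :=
  / sqrt (Cmod w ^ 2 - a ^ 2) * (sgn * Arg w - acos (a / Cmod w) + 2 * IZR n * PI).
Definition tau_plus (n : Z) (a : R) (w : C) : R := tau_pm 1 n a w.
Definition tau_minus (n : Z) (a : R) (w : C) : R := tau_pm (-1) n a w.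

Definition a_fun (Om psi tau : R) : R := - Om * (cos (tau * Om - psi) / sin (tau * Om - psi)).
Definition rho_fun (Om psi tau : R) : R := - Om / sin (tau * Om - psi).

Definition in_I (k : Z) (psi x : R) : Prop :=
  if Z.ltb 0 k then psi + 2 * IZR k * PI - PI < x < psi + 2 * IZR k * PI
  else if Z.ltb k 0 then psi + 2 * IZR k * PI < x < psi + 2 * IZR k * PI + PI
  else False.

Definition expi (psi : R) : C := (cos psi, sin psi).

Definition in_Gamma (k : Z) (psi tau : R) (p : R * C) : Prop :=
  exists Om : R, in_I k psi (tau * Om) /\
    p = (a_fun Om psi tau, Cmult (RtoC (rho_fun Om psi tau)) (expi psi)).

From Stdlib Require Import Reals ZArith Lra Lia.
From Coquelicot Require Import Coquelicot.
Open Scope R_scope.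

(* Write sigma = sgn k and theta = tau*Om - psi.  The condition
   tau*Om in I_k(psi) says exactly that alpha := sigma*(2k*PI - theta) lies in
   (0,PI), and then cos theta = cos alpha, sin theta = -sigma*sin alpha.  Hence
   Gamma_k(psi;tau) is the curve alpha |-> (rho cos alpha, rho e^{i psi}),
   0 < alpha < PI, with the positive radius
   rho(alpha) = sigma*Om(alpha)/sin alpha, Om(alpha) = (2k*PI + psi - sigma*alpha)/tau
   (lemma [in_Gamma_polar]).  A scaled point (s a, s w) with |a| < |w| lies on
   this curve iff s|w| = rho(alpha), Arg w = psi and alpha = acos(a/|w|), by
   uniqueness of polar forms ([scaled_point_iff]).  Finally, since
   sqrt(|w|^2 - a^2) = |w| sin(acos(a/|w|)), the radius equation is the stated
   formula s = tau^{+-}/tau ([scale_of_radius]). *)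

Definition sgnZ (k : Z) : R := if Z.ltb 0 k then 1 else -1.

Lemma sgnZ_cases (k : Z) : sgnZ k = 1 \/ sgnZ k = -1.
Proof. unfold sgnZ; destruct (Z.ltb 0 k); auto. Qed.

Lemma sgnZ_mul_ge1 (k : Z) : k <> 0%Z -> 1 <= sgnZ k * IZR k.
Proof.
  intros Hk; unfold sgnZ; destruct (Z.ltb_spec 0 k).
  - rewrite Rmult_1_l; apply IZR_le; lia.
  - assert (IZR k <= -1) by (apply IZR_le; lia); lra.
Qed.

(* The sign is its own inverse, so [alpha] and [theta] determine each other. *)
Lemma sgnZ_sq (k : Z) : sgnZ k * sgnZ k = 1.
Proof. destruct (sgnZ_cases k) as [-> | ->]; ring. Qed.

(* Periodicity under natural multiples of [2*PI] (the form of Stdlib's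
   [sin_period], [cos_period]) extends to integer multiples. *)
Lemma periodic_Z (f : R -> R) :
  (forall x n, f (x + 2 * INR n * PI) = f x) ->
  forall x k, f (x + 2 * IZR k * PI) = f x.
Proof.
  intros Hf x k; destruct (Z_le_gt_dec 0 k) as [Hk|Hk].
  - rewrite <- (Z2Nat.id k Hk), <- INR_IZR_INZ; apply Hf.
  - assert (E : IZR k = - INR (Z.to_nat (- k))).
    { rewrite INR_IZR_INZ, Z2Nat.id by lia; rewrite opp_IZR; ring. }
    rewrite <- (Hf (x + 2 * IZR k * PI) (Z.to_nat (- k))); f_equal; rewrite E; ring.
Qed.

Lemma cos_reflect (k j : Z) (alpha : R) :
  cos (2 * IZR k * PI - sgnZ j * alpha) = cos alpha.
Proof.
  replace (2 * IZR k * PI - sgnZ j * alpha) with (- (sgnZ j * alpha) + 2 * IZR k * PI)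
    by ring.
  rewrite (periodic_Z cos cos_period), cos_neg.
  destruct (sgnZ_cases j) as [-> | ->].
  - rewrite Rmult_1_l; reflexivity.
  - replace (-1 * alpha) with (- alpha) by ring; apply cos_neg.
Qed.

Lemma sin_reflect (k j : Z) (alpha : R) :
  sin (2 * IZR k * PI - sgnZ j * alpha) = - sgnZ j * sin alpha.
Proof.
  replace (2 * IZR k * PI - sgnZ j * alpha) with (- (sgnZ j * alpha) + 2 * IZR k * PI)
    by ring.
  rewrite (periodic_Z sin sin_period), sin_neg.
  destruct (sgnZ_cases j) as [-> | ->].
  - rewrite Rmult_1_l; ring.
  - replace (-1 * alpha) with (- alpha) by ring; rewrite sin_neg; ring.
Qed.

Lemma in_I_iff (k : Z) (psi x : R) :
  k <> 0%Z -> in_I k psi x <-> 0 < sgnZ k * (2 * IZR k * PI + psi - x) < PI.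
Proof.
  intros Hk; unfold in_I, sgnZ; destruct (Z.ltb_spec 0 k).
  - split; intros; lra.
  - replace (Z.ltb k 0) with true by (symmetry; apply Z.ltb_lt; lia).
    split; intros; lra.
Qed.

Lemma polar_form (r p : R) : Cmult (RtoC r) (expi p) = (r * cos p, r * sin p).
Proof. unfold Cmult, RtoC, expi; cbn [fst snd]; f_equal; ring. Qed.

Lemma Cmod_polar (r p : R) : 0 <= r -> Cmod (r * cos p, r * sin p) = r.
Proof.
  intros Hr; unfold Cmod; cbn [fst snd].
  replace ((r * cos p) ^ 2 + (r * sin p) ^ 2) with (r * r).
  - apply sqrt_square; exact Hr.
  - pose proof (sin2_cos2 p) as H; unfold Rsqr in H; nra.
Qed.

Lemma Arg_polar (r p : R) : 0 < r -> - PI < p <= PI -> Arg (r * cos p, r * sin p) = p.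
Proof.
  intros Hr Hp; unfold Arg; rewrite Cmod_polar by lra; simpl.
  replace (r * cos p / r) with (cos p) by (field; lra).
  destruct (Rle_dec 0 (r * sin p)) as [H|H]; destruct (Rlt_le_dec p 0) as [Hn|Hn].
  - pose proof (sin_lt_0_var p ltac:(lra) Hn); nra.
  - apply acos_cos; lra.
  - rewrite <- cos_neg, acos_cos by lra; ring.
  - pose proof (sin_ge_0 p Hn ltac:(lra)); nra.
Qed.

Lemma polar_of_Arg (w : C) : w <> RtoC 0 -> w = Cmult (RtoC (Cmod w)) (expi (Arg w)).
Proof.
  intros Hw; rewrite polar_form; destruct w as [u v].
  assert (Hr : 0 < Cmod (u, v)) by (apply Cmod_gt_0; exact Hw).
  assert (Hr2 : Cmod (u, v) ^ 2 = u ^ 2 + v ^ 2).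
  { unfold Cmod; cbn [fst snd]; rewrite pow2_sqrt; [ring | nra]. }
  unfold Arg; simpl; set (r := Cmod (u, v)) in *.
  assert (Hx : -1 <= u / r <= 1).
  { split; apply (Rmult_le_reg_r r); try lra; field_simplify; nra. }
  assert (Hsin : sin (acos (u / r)) = Rabs (v / r)).
  { rewrite sin_acos, <- sqrt_Rsqr_abs by exact Hx; f_equal; unfold Rsqr.
    apply (Rmult_eq_reg_r (r * r)); [|nra]; field_simplify; nra. }
  destruct (Rle_dec 0 v).
  - rewrite cos_acos, Hsin, Rabs_pos_eq by (auto; apply Rdiv_le_0_compat; lra).
    f_equal; field; lra.
  - assert (v / r < 0) by (apply (Rmult_lt_reg_r r); [lra|]; field_simplify; lra).
    rewrite cos_neg, sin_neg, cos_acos, Hsin, Rabs_left by auto.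
    f_equal; field; lra.
Qed.

Lemma polar_iff (w : C) (rho psi : R) :
  0 < rho -> - PI < psi <= PI ->
  w = Cmult (RtoC rho) (expi psi) <-> Cmod w = rho /\ Arg w = psi.
Proof.
  intros Hrho Hpsi; split.
  - intros ->; rewrite polar_form, Cmod_polar, Arg_polar by lra; auto.
  - intros [Hmod Harg].
    assert (Hw : w <> RtoC 0) by (apply Cmod_gt_0; lra).
    rewrite (polar_of_Arg w Hw), Hmod, Harg; reflexivity.
Qed.

Lemma Arg_scale (s : R) (w : C) :
  0 < s -> 0 < Cmod w -> Arg (Cmult (RtoC s) w) = Arg w.
Proof.
  intros Hs Hw; unfold Arg; rewrite Cmod_mult, Cmod_R, Rabs_pos_eq by lra.
  destruct w as [u v]; simpl.
  replace ((s * u - 0 * v) / (s * Cmod (u, v))) with (u / Cmod (u, v)) by (field; lra).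
  destruct (Rle_dec 0 (s * v + 0 * u)), (Rle_dec 0 v); auto; exfalso; nra.
Qed.

Lemma ratio_bounds (a r : R) : Rabs a < r -> -1 < a / r < 1.
Proof.
  intros Har; apply Rabs_def2 in Har.
  split; apply (Rmult_lt_reg_r r); try lra; field_simplify; lra.
Qed.

Lemma sqrt_diff_sq (a r : R) :
  Rabs a < r -> sqrt (r ^ 2 - a ^ 2) = r * sin (acos (a / r)).
Proof.
  intros Har; pose proof (ratio_bounds a r Har) as Hx.
  assert (Hr : 0 < r) by (pose proof (Rabs_pos a); lra).
  rewrite sin_acos by lra.
  replace (r ^ 2 - a ^ 2) with (r² * (1 - (a / r)²)) by (unfold Rsqr; field; lra).
  rewrite sqrt_mult_alt, sqrt_Rsqr by (apply Rle_0_sqr || lra); reflexivity.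
Qed.

Lemma scaled_point_iff (s rho alpha psi a : R) (w : C) :
  0 < s -> 0 < rho -> 0 < alpha < PI -> - PI < psi <= PI -> Rabs a < Cmod w ->
  (s * a, Cmult (RtoC s) w) = (rho * cos alpha, Cmult (RtoC rho) (expi psi)) <->
  s * Cmod w = rho /\ Arg w = psi /\ alpha = acos (a / Cmod w).
Proof.
  intros Hs Hrho Halpha Hpsi Hab.
  pose proof (ratio_bounds a (Cmod w) Hab) as Hx.
  assert (Hr : 0 < Cmod w) by (pose proof (Rabs_pos a); lra).
  rewrite pair_equal_spec, polar_iff, Cmod_mult, Cmod_R, Rabs_pos_eq, Arg_scale by lra.
  split.
  - intros [Ha [Hmod Harg]]; repeat split; auto.
    replace (a / Cmod w) with (cos alpha)
      by (apply (Rmult_eq_reg_l s); [|lra];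
          unfold Rdiv; rewrite <- Rmult_assoc, Ha, <- Hmod; field; lra).
    symmetry; apply acos_cos; lra.
  - intros [Hmod [Harg ->]]; repeat split; auto.
    rewrite cos_acos, <- Hmod by lra; field; lra.
Qed.

(* Reparametrization of Gamma_k by the angle [alpha] in (0,PI): the frequency
   [gamma_omega] and the radius [gamma_radius] of the corresponding point. *)
Definition gamma_omega (k : Z) (psi tau alpha : R) : R :=
  (2 * IZR k * PI + psi - sgnZ k * alpha) / tau.

Definition gamma_radius (k : Z) (psi tau alpha : R) : R :=
  sgnZ k * (2 * IZR k * PI + psi - sgnZ k * alpha) / (tau * sin alpha).

Lemma gamma_omega_angle (k : Z) (psi tau alpha : R) :
  0 < tau -> tau * gamma_omega k psi tau alpha - psi = 2 * IZR k * PI - sgnZ k * alpha.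
Proof. intros Htau; unfold gamma_omega; field; lra. Qed.

Lemma gamma_point (k : Z) (psi tau alpha : R) :
  0 < tau -> 0 < alpha < PI ->
  a_fun (gamma_omega k psi tau alpha) psi tau = gamma_radius k psi tau alpha * cos alpha /\
  rho_fun (gamma_omega k psi tau alpha) psi tau = gamma_radius k psi tau alpha.
Proof.
  intros Htau Halpha.
  assert (Hsin : 0 < sin alpha) by (apply sin_gt_0; lra).
  unfold a_fun, rho_fun; rewrite gamma_omega_angle, cos_reflect, sin_reflect by lra.
  unfold gamma_radius, gamma_omega.
  destruct (sgnZ_cases k) as [-> | ->]; split; field; lra.
Qed.

(* The radius is positive: [sgn k * 2k*PI >= 2*PI] dominates [|psi| + alpha]. *)
Lemma gamma_radius_pos (k : Z) (psi tau alpha : R) :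
  - PI < psi <= PI -> 0 < tau -> k <> 0%Z -> 0 < alpha < PI ->
  0 < gamma_radius k psi tau alpha.
Proof.
  intros Hpsi Htau Hk Halpha; unfold gamma_radius.
  pose proof (sgnZ_mul_ge1 k Hk) as Hk1; pose proof PI_RGT_0.
  apply Rdiv_lt_0_compat.
  - destruct (sgnZ_cases k) as [E | E]; rewrite E in *; nra.
  - apply Rmult_lt_0_compat; [lra | apply sin_gt_0; lra].
Qed.

Lemma in_Gamma_polar (k : Z) (psi tau : R) (p : R * C) :
  0 < tau -> k <> 0%Z ->
  in_Gamma k psi tau p <->
  exists alpha, 0 < alpha < PI /\
    p = (gamma_radius k psi tau alpha * cos alpha,
         Cmult (RtoC (gamma_radius k psi tau alpha)) (expi psi)).
Proof.
  intros Htau Hk; split.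
  - intros [Om [HI ->]]; rewrite in_I_iff in HI by exact Hk.
    set (alpha := sgnZ k * (2 * IZR k * PI + psi - tau * Om)) in HI.
    exists alpha; split; [exact HI|].
    assert (HOm : Om = gamma_omega k psi tau alpha).
    { unfold gamma_omega, alpha.
      replace (2 * IZR k * PI + psi - sgnZ k * (sgnZ k * (2 * IZR k * PI + psi - tau * Om)))
        with (2 * IZR k * PI + psi - sgnZ k * sgnZ k * (2 * IZR k * PI + psi - tau * Om))
        by ring.
      rewrite sgnZ_sq; field; lra. }
    destruct (gamma_point k psi tau alpha Htau HI) as [Ea Er].
    rewrite HOm, Ea, Er; reflexivity.
  - intros [alpha [Halpha ->]]; exists (gamma_omega k psi tau alpha); split.
    + rewrite in_I_iff by exact Hk.
      pose proof (gamma_omega_angle k psi tau alpha Htau) as Hangle.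
      replace (tau * gamma_omega k psi tau alpha)
        with (2 * IZR k * PI + psi - sgnZ k * alpha) by lra.
      replace (sgnZ k * (2 * IZR k * PI + psi - (2 * IZR k * PI + psi - sgnZ k * alpha)))
        with (sgnZ k * sgnZ k * alpha) by ring.
      rewrite sgnZ_sq; lra.
    + destruct (gamma_point k psi tau alpha Htau Halpha) as [Ea Er].
      rewrite Ea, Er; reflexivity.
Qed.

Lemma tau_branch (k : Z) (tau s a : R) (w : C) :
  (if Z.ltb 0 k then s = / tau * tau_plus k a w else s = / tau * tau_minus (- k) a w) <->
  s = / tau * (/ sqrt (Cmod w ^ 2 - a ^ 2) *
               (sgnZ k * (Arg w + 2 * IZR k * PI) - acos (a / Cmod w))).
Proof.
  unfold tau_plus, tau_minus, tau_pm, sgnZ; destruct (Z.ltb 0 k);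
    rewrite ?opp_IZR; split; intros ->; ring.
Qed.

Lemma scale_of_radius (k : Z) (psi tau s a : R) (w : C) :
  0 < tau -> Rabs a < Cmod w -> Arg w = psi ->
  s * Cmod w = gamma_radius k psi tau (acos (a / Cmod w)) <->
  s = / tau * (/ sqrt (Cmod w ^ 2 - a ^ 2) *
               (sgnZ k * (Arg w + 2 * IZR k * PI) - acos (a / Cmod w))).
Proof.
  intros Htau Hab Harg.
  pose proof (ratio_bounds a (Cmod w) Hab) as Hx.
  assert (Hr : 0 < Cmod w) by (pose proof (Rabs_pos a); lra).
  assert (Hsin : 0 < sin (acos (a / Cmod w))).
  { apply sin_gt_0; apply acos_bound_lt; exact Hx. }
  rewrite sqrt_diff_sq, Harg by exact Hab; unfold gamma_radius.
  destruct (sgnZ_cases k) as [-> | ->]; split; intros H.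
  1, 3: apply (Rmult_eq_reg_r (Cmod w)); [rewrite H; field; lra | lra].
  all: rewrite H; field; lra.
Qed.

Theorem mainTheorem20 (psi tau : R) (k : Z) :
  - PI < psi <= PI -> 0 < tau -> k <> 0%Z ->
  forall (a : R) (w : C), w <> RtoC 0 -> Rabs a < Cmod w ->
  forall s : R, 0 < s ->
  (in_Gamma k psi tau (s * a, Cmult (RtoC s) w) <->
   ((if Z.ltb 0 k then s = / tau * tau_plus k a w
     else s = / tau * tau_minus (- k) a w) /\ Arg w = psi)).
Proof.
  intros Hpsi Htau Hk a w _ Hab s Hs.
  rewrite in_Gamma_polar, tau_branch by assumption.
  split.
  - intros [alpha [Halpha Hpoint]].
    apply scaled_point_iff in Hpoint as [Hrad [Harg ->]];
      try apply gamma_radius_pos; auto.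
    split; [apply (scale_of_radius k psi) | ]; auto.
  - intros [Hs_eq Harg].
    assert (Halpha : 0 < acos (a / Cmod w) < PI)
      by (apply acos_bound_lt, ratio_bounds, Hab).
    exists (acos (a / Cmod w)); split; [exact Halpha|].
    apply scaled_point_iff; try apply gamma_radius_pos; auto.
    repeat split; auto; apply (scale_of_radius k psi); auto.
Qed.
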